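(* Let $w \in S_n$. If $w$ contains a $321$ pattern, then the Schubert polynomial $\mathfrak{S}_w$ is not a complete homogeneous monomial.
   Context: $h^i_j$ is the complete homogeneous symmetric polynomial of degree $j$ in $x_1,\dots,x_i$; a complete homogeneous monomial is a product $h^1_{a_1}h^2_{a_2}\cdots$ with nonnegative integers $a_i$, finitely many nonzero. Schubert polynomials: $\mathfrak{S}_{w_0} = x_1^{n-1}\cdots x_{n-1}$ for the longest $w_0 \in S_n$, and $\partial_i\mathfrak{S}_w = \mathfrak{S}_{ws_i}$ if $\ell(ws_i)=\ell(w)-1$, $0$ otherwise, where $\partial_i f = (f-s_if)/(x_i-x_{i+1})$. $w$ contains a $321$ pattern if there are $i<j<k$ with $w(i)>w(j)>w(k)$. *)

From HB Require Import structures.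
From mathcomp Require Import all_boot all_order all_algebra all_fingroup.
From mathcomp Require Import mpoly.
Set Implicit Arguments. Unset Strict Implicit. Unset Printing Implicit Defensive.
Import Order.TTheory GRing.Theory Num.Theory.
Local Open Scope ring_scope.

(* Polynomials in the variables x_1, ..., x_N are {mpoly int[N]};
   x_{k+1} is represented by [var k] (and is 0 if k >= N, never used). *)
Definition var (N : nat) (k : nat) : {mpoly int[N]} :=
  match insub k with Some i => 'X_i | None => 0 end.

Definition hcomp (N : nat) (i j : nat) : {mpoly int[N]} :=
  \sum_(m : 'X_{1..N < j.+1} |
          (mdeg (m : 'X_{1..N}) == j) && [forall k : 'I_N, (i <= k)%N ==> (m k == 0%N)])
     'X_[(m : 'X_{1..N})].

Definition complete_hom_monomial (N : nat) (f : {mpoly int[N]}) : Prop :=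
  exists a : 'I_N -> nat, f = \prod_(k < N) hcomp N k.+1 (a k).

(* the substitution s_i exchanging x_{i+1} and x_{i+2} (0-based i) *)
Definition swapvar (N i : nat) (p : {mpoly int[N]}) : {mpoly int[N]} :=
  comp_mpoly [tuple var N (if val k == i then i.+1
                           else if val k == i.+1 then i else val k) | k < N] p.

Definition perm_length (n : nat) (w : {perm 'I_n}) : nat :=
  #|[set p : 'I_n * 'I_n | (p.1 < p.2)%N && (w p.2 < w p.1)%N]|.

Definition w0 (n : nat) : {perm 'I_n} := perm (@rev_ord_inj n).

(* S is the family of Schubert polynomials of S_n (variables x_1..x_N, n <= N):
   S_{w0} = x_1^{n-1} x_2^{n-2} ... x_{n-1}, and for every simple transposition
   s_i = (i i+1),  d_i S_w = S_{w s_i} if l(w s_i) = l(w) - 1, and 0 otherwise,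
   where d_i f = (f - s_i f)/(x_i - x_{i+1}); the division is unfolded as
   (x_i - x_{i+1}) * d_i f = f - s_i f (the ring is an integral domain). *)
Definition schubert_family (n N : nat) (S : {perm 'I_n} -> {mpoly int[N]}) : Prop :=
  S (w0 n) = \prod_(k < n) var N k ^+ (n.-1 - k)
  /\ forall (w : {perm 'I_n}) (i j : 'I_n), val j = (val i).+1 ->
       let ws := (tperm i j * w)%g in   (* ws = w o s_i *)
       if (perm_length ws).+1 == perm_length w
       then (var N i - var N j) * S ws = S w - swapvar i (S w)
       else S w - swapvar i (S w) = 0.

Definition contains321 (n : nat) (w : {perm 'I_n}) : Prop :=
  exists i j k : 'I_n, [/\ (i < j)%N, (j < k)%N, (w j < w i)%N & (w k < w j)%N].

From HB Require Import structures.
From mathcomp Require Import all_boot all_order all_algebra all_fingroup.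
From mathcomp Require Import mpoly zify.
Set Implicit Arguments. Unset Strict Implicit. Unset Printing Implicit Defensive.
Import GRing.Theory.

Lemma card_ord_gt (m k : nat) : #|[set j : 'I_m | k < j]| = m - k.+1.
Proof.
rewrite -sum1_card big_mkcond /=.
under eq_bigr do rewrite inE.
elim: m => [|m IH]; first by rewrite big_ord0.
by rewrite big_ord_recr /= IH; case: ltnP; lia.
Qed.

Section PermutationStatistics.

Variable n : nat.
Implicit Types (u : {perm 'I_n}) (a b i j : 'I_n).

Definition inversions u :=
  [set p : 'I_n * 'I_n | (p.1 < p.2) && (u p.2 < u p.1)].

Lemma perm_lengthE u : perm_length u = #|inversions u|.
Proof. by []. Qed.

Definition nonrecords u (k : nat) : {set 'I_n} :=
  [set j : 'I_n | (k <= j) && [exists j' : 'I_n, [&& k <= j', j' < j & u j < u j']]].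

Lemma card_nonrecords0_lt_length u :
  contains321 u -> #|nonrecords u 0| < perm_length u.
Proof.
case=> a [b [c [ab bc uba ucb]]].
pose witness j := odflt j [pick j' : 'I_n | (j' < j) && (u j < u j')].
pose f j := (witness j, j).
have f_inj : injective f by move=> x y [].
rewrite perm_lengthE -(card_imset _ f_inj); apply/proper_card/properP; split.
  apply/subsetP => p /imsetP [j]; rewrite inE /= => /existsP [j' /andP [j'j uj]] ->.
  rewrite inE /f /witness; case: pickP => [x /andP [-> ->] //|/(_ j')].
  by rewrite j'j uj.
have ac_inv : (a, c) \in inversions u by rewrite inE /=; apply/andP; split; lia.
have bc_inv : (b, c) \in inversions u by rewrite inE /=; apply/andP; split; lia.
have [/imsetP [x _ [ea ec]]|] := boolP ((a, c) \in f @: nonrecords u 0); last first.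
  by exists (a, c).
exists (b, c) => //; apply/imsetP => -[y _ [eb ecy]].
by move: ab; rewrite ea eb -ec -ecy ltnn.
Qed.

Lemma perm_length_tpermM_desc i j u :
  j = i.+1 :> nat -> u j < u i -> (perm_length (tperm i j * u)%g).+1 = perm_length u.
Proof.
move=> ji uji; rewrite !perm_lengthE.
pose s := tperm i j; pose sig p := (s p.1, s p.2).
have sig_inv : involutive sig by move=> [x y]; rewrite /sig /= !tpermK.
have -> : inversions u = (i, j) |: (sig @^-1: inversions (s * u)%g).
  apply/setP => [[x y]]; rewrite !inE /= !permM !tpermK xpair_eqE -!val_eqE /=.
  by rewrite /s; case: (tpermP i j x) => [->|->|/val_eqP/= + /val_eqP/= +];
     case: (tpermP i j y) => [->|->|/val_eqP/= + /val_eqP/= +]; lia.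
rewrite cardsU1 card_preimset; last exact: inv_inj.
by rewrite !inE /= /s tpermL tpermR; lia.
Qed.

Lemma decreasing_before_lt u i :
    (forall a b, b = a.+1 :> nat -> b <= i -> u b < u a) ->
  forall a, a < i -> u i < u a.
Proof.
move=> dec a ai.
suff gap d b : i - b = d.+1 -> u i < u b by apply: (gap (i - a).-1); lia.
elim: d b => [|d IH] b ibd; have bn : b.+1 < n by have := ltn_ord i; lia.
  have -> : i = Ordinal bn by apply: val_inj => /=; lia.
  by apply: dec => /=; lia.
apply: (ltn_trans (IH (Ordinal bn) _)); first by rewrite /=; lia.
by apply: dec => /=; lia.
Qed.

Lemma decreasing_perm_w0 u : (forall a b, b = a.+1 :> nat -> u b < u a) -> u = w0 n.
Proof.
move=> dec.
have ub k a : a = k :> nat -> u a + a <= n.-1.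
  elim: k a => [|k IH] a ak; first by have := ltn_ord (u a); lia.
  have kn : k < n by have := ltn_ord a; lia.
  by have := IH (Ordinal kn) erefl; have := dec (Ordinal kn) a; rewrite /=; lia.
have lb d a : n.-1 - a = d -> n.-1 <= u a + a.
  elim: d a => [|d IH] a ad; first lia.
  have an : a.+1 < n by have := ltn_ord a; lia.
  have := IH (Ordinal an) ltac:(rewrite /=; lia).
  by have := dec a (Ordinal an) erefl; rewrite /=; lia.
apply/permP => a; apply: val_inj; rewrite permE /=.
by have := ub _ a erefl; have := lb _ a erefl; lia.
Qed.

Lemma perm_length_w0 : perm_length (w0 n) = \sum_(k < n) (n - k.+1).
Proof.
rewrite perm_lengthE; have -> : inversions (w0 n) = [set p : 'I_n * 'I_n | p.1 < p.2].
  apply/setP => [[x y]]; rewrite !inE /= !permE /=.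
  by have := ltn_ord x; have := ltn_ord y; case: ltnP => //=; lia.
rewrite -sum1_card big_mkcond /=; under eq_bigr do rewrite inE.
rewrite -(pair_bigA _ (fun x y : 'I_n => if x < y then 1 else 0)) /=.
apply: eq_bigr => x _; rewrite -big_mkcond sum1_card -card_ord_gt.
by apply: eq_card => y; rewrite !inE.
Qed.

Lemma card_nonrecords_w0 (k : nat) : n - k.+1 <= #|nonrecords (w0 n) k|.
Proof.
have [kn|nk] := ltnP k n; last by have -> : n - k.+1 = 0 by lia.
rewrite -card_ord_gt; apply/subset_leq_card/subsetP => x; rewrite !inE => kx.
rewrite ltnW //=; apply/existsP; exists (Ordinal kn); rewrite leqnn kx !permE /=.
by have := ltn_ord x; lia.
Qed.

Lemma perm_length_le u : perm_length u <= n * n.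
Proof. by rewrite perm_lengthE (leq_trans (max_card _)) // card_prod card_ord. Qed.

Lemma first_ascent u : u != w0 n ->
  exists i j, [/\ j = i.+1 :> nat, u i < u j & forall a, a < i -> u i < u a].
Proof.
move=> uw0.
have desc_of_not_asc a b : b = a.+1 :> nat -> ~~ (u a < u b) -> u b < u a.
  move=> ba; rewrite -leqNgt leq_eqVlt val_eqE (inj_eq perm_inj) => /orP [/eqP ab|//].
  by move: ba; rewrite ab; lia.
pose asc (k : nat) := [exists a : 'I_n, exists b : 'I_n, [&& a == k :> nat, b == a.+1 :> nat & u a < u b]].
have asc_at a b : b = a.+1 :> nat -> u a < u b -> asc a.
  by move=> ba uab; apply/existsP; exists a; apply/existsP; exists b; rewrite eqxx ba eqxx uab.
have ex_asc : exists k, asc k.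
  have [/existsP [a asc_a]|no_asc] := boolP [exists a : 'I_n, asc a]; first by exists a.
  case/eqP: uw0; apply: decreasing_perm_w0 => a b ba; apply: desc_of_not_asc => //.
  by apply: contra no_asc => /(asc_at _ _ ba) asc_a; apply/existsP; exists a.
case: (ex_minnP ex_asc) => _ /existsP [i /existsP [j /and3P [/eqP <- /eqP ji uij]]] imin.
exists i, j; split => //; apply: decreasing_before_lt => a b ba bi.
apply: desc_of_not_asc => //; apply/negP => /(asc_at _ _ ba) /imin.
lia.
Qed.



Section Ascent.

Variables (u : {perm 'I_n}) (i j : 'I_n).
Hypothesis ji : j = i.+1 :> nat.
Hypothesis uij : u i < u j.
Let v := (tperm i j * u)%g.

Lemma nonrecords_ascent : nonrecords u i = nonrecords u i.+1.
Proof.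
apply/setP => x; rewrite !inE.
apply/andP/andP => -[ix /existsP [y /and3P [iy yx uxy]]]; last first.
  by split; [lia | apply/existsP; exists y; apply/and3P; split; lia].
have [/val_inj yi|yi] := eqVneq (y : nat) i; last first.
  by split; [lia | apply/existsP; exists y; apply/and3P; split; lia].
subst y; have xj : x != j :> nat by apply: contraTneq uxy => /val_inj ->; lia.
by split; [lia | apply/existsP; exists j; apply/and3P; split; lia].
Qed.

Lemma nonrecords_tpermM_at : nonrecords v i \subset j |: nonrecords u i.
Proof.
apply/subsetP => x; rewrite !inE.
move=> /andP [ix /existsP [y /and3P [iy yx]]]; rewrite !permM.
have [-> //|xj] := eqVneq x j; rewrite -val_eqE /= in xj.
have xi : x != i by rewrite -val_eqE /=; lia.
rewrite tpermD 1?eq_sym -?val_eqE //= => uxy.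
apply/andP; split; first lia.
apply/existsP; exists (tperm i j y); move: uxy.
by case: tpermP => [yi'|yj'|/val_eqP/= + /val_eqP/= +] => //;
  rewrite ?yi' ?yj' //; lia.
Qed.

Lemma nonrecords_tpermM_succ : nonrecords v i.+1 \subset nonrecords u i.+1.
Proof.
apply/subsetP => x; rewrite !inE => /andP [ix /existsP [y /and3P [iy yx]]].
rewrite !permM (@tpermD _ i j x) -?val_eqE /=; try lia.
move=> uxy; apply/andP; split => //; apply/existsP; move: uxy.
case: tpermP => [yi|yj uxi|/val_eqP/= yi /val_eqP/= yj uxy].
- by move: iy; rewrite yi ltnn.
- by exists j; apply/and3P; split; lia.
- by exists y; apply/and3P; split; lia.
Qed.

Lemma nonrecords_tpermM_far (k : nat) :
    (forall a, a < i -> u i < u a) -> k != i -> k != i.+1 ->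
  nonrecords v k \subset tperm i j @^-1: nonrecords u k.
Proof.
move=> dec ki kj; apply/subsetP => x; rewrite !inE => /andP [kx /existsP [y /and3P [ky yx]]].
rewrite !permM.
have [ik|ki'] := ltnP i k.
  rewrite !(@tpermD _ i j) -?val_eqE /=; try lia.
  by move=> uxy; rewrite kx; apply/existsP; exists y; apply/and3P.
case: (tpermP i j x) => [/val_eqP/= xi|/val_eqP/= xj|/val_eqP/= xi /val_eqP/= xj].
- rewrite (@tpermD _ i j y) -?val_eqE /=; try lia.
  by move=> ujy; apply/andP; split; [lia | apply/existsP; exists y; apply/and3P; split; lia].
- have kn : k < n by have := ltn_ord i; lia.
  move=> _; apply/andP; split; first lia.
  by apply/existsP; exists (Ordinal kn); apply/and3P; split => //=; [lia | apply: dec => /=; lia].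
- move=> uxy; apply/andP; split; first lia.
  apply/existsP; exists (tperm i j y); move: uxy.
  by case: (tpermP i j y) => [/val_eqP/= yi|/val_eqP/= yj|/val_eqP/= yi /val_eqP/= yj] uxy;
    apply/and3P; split; lia.
Qed.

Lemma card_nonrecords_tpermM (k : nat) :
    (forall a, a < i -> u i < u a) ->
  #|nonrecords v k| <= #|nonrecords u k| + (k == i).
Proof.
move=> dec; have [->|ki] := eqVneq k i.
  rewrite addn1; apply: leq_trans (subset_leq_card nonrecords_tpermM_at) _.
  by rewrite cardsU1; case: (j \in _).
rewrite addn0; have [->|kj] := eqVneq k i.+1.
  exact/subset_leq_card/nonrecords_tpermM_succ.
rewrite -(card_preimset (nonrecords u k) (@perm_inj _ (tperm i j))).
exact: subset_leq_card (nonrecords_tpermM_far dec ki kj).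
Qed.

Lemma perm_length_tpermM_asc : perm_length v = (perm_length u).+1.
Proof.
have uv : (tperm i j * v)%g = u by rewrite /v tpermKg.
by rewrite -[in RHS]uv perm_length_tpermM_desc // /v !permM tpermL tpermR.
Qed.

End Ascent.

End PermutationStatistics.

Local Open Scope ring_scope.

Section DividedDifferenceSupport.

Variable N : nat.
Implicit Types (a b k : 'I_N) (m : 'X_{1..N}) (f g p : {mpoly int[N]}).

Lemma varE k : var N k = 'X_k.
Proof. by rewrite /var; case: insubP => [k' _ /val_inj -> | ] //; rewrite ltn_ord. Qed.

Lemma swapvar_msym a b p : b = a.+1 :> nat -> swapvar a p = msym (tperm a b) p.
Proof.
move=> ba; rewrite /swapvar /comp_mpoly /msym; apply: eq_bigr => m _; congr (_ * _).
apply: eq_bigr => k _; rewrite tnth_mktuple; congr (_ ^+ _).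
case: tpermP => [->|->|/val_eqP/= ka /val_eqP/= kb].
- by rewrite /= eqxx -ba varE.
- by rewrite /= ba gtn_eqF // eqxx varE.
- by rewrite -ba (negbTE ka) (negbTE kb) varE.
Qed.

Definition mbox (d : nat) (c : 'I_N -> nat) : pred 'X_{1..N} :=
  [pred m | (mdeg m == d) && [forall k, m k <= c k]%N].

Lemma mbox_le d (c c' : 'I_N -> nat) :
  (forall k, c k <= c' k)%N -> {subset mbox d c <= mbox d c'}.
Proof.
move=> cc' m; rewrite !inE => /andP [-> /forallP mc]; apply/forallP => k.
exact: leq_trans (mc k) (cc' k).
Qed.


Lemma msupp_sub_swapvar a b d c f :
    b = a.+1 :> nat -> c a = c b ->
  {subset msupp f <= mbox d c} -> {subset msupp (f - swapvar a f) <= mbox d c}.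
Proof.
move=> ba cab fc m /msuppB_le; rewrite mem_cat => /orP [/fc //|].
rewrite (swapvar_msym f ba) mcoeff_msupp mcoeff_sym -mcoeff_msupp => /fc.
rewrite !inE mdeg_mperm => /andP [-> /forallP mc] /=; apply/forallP => k.
have := mc (tperm a b k); rewrite mnmE tpermK.
by case: tpermP => [->|->|//]; rewrite cab.
Qed.

Lemma mcoeff_XM a g m : ('X_a * g)@_(m + U_(a)) = g@_m.
Proof. by rewrite mulrC addmC mcoeffMX. Qed.

Lemma mcoeff_XM_eq0 b g m : m b = 0%N -> ('X_b * g)@_m = 0.
Proof.
move=> mb; apply/eqP/negPn/negP; rewrite -mcoeff_msupp mulrC (perm_mem (msuppMX _ _)).
by case/mapP => m' _ mE; move: mb; rewrite mE mnmDE mnm1E eqxx /=; lia.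
Qed.

Lemma mcoeff_XsubXM a b g m : a != b ->
  (('X_a - 'X_b) * g)@_(m + U_(a)) =
    g@_m - (if (0 < m b)%N then g@_(m + U_(a) - U_(b)) else 0).
Proof.
move=> ab; rewrite mulrBl mcoeffB mcoeff_XM; congr (_ - _).
case: ifPn => [mb|]; last first.
  by rewrite -eqn0Ngt => /eqP mb; apply: mcoeff_XM_eq0; rewrite mnmDE mnm1E (negbTE ab) addn0.
have le : (U_(b) <= m + U_(a))%MM.
  by apply/mnm_lepP => k; rewrite mnmDE !mnm1E; case: (b =P k) => [<-|_] /=; lia.
by rewrite -{1}(submK le) mcoeff_XM.
Qed.


Lemma msupp_XsubXM_avoid a b g (P bad : pred 'X_{1..N}) :
    a != b ->
    {subset msupp (('X_a - 'X_b) * g) <= P} ->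
    (forall m, bad m -> (0 < m b)%N -> bad (m + U_(a) - U_(b))%MM) ->
    (forall m, bad m -> (m + U_(a))%MM \notin P) ->
  forall m, m \in msupp g -> ~~ bad m.
Proof.
move=> ab gP bad_shift bad_notP.
suff gap r m : (msize g - m a <= r)%N -> m \in msupp g -> ~~ bad m.
  by move=> m; apply: gap (leqnn _).
elim: r m => [|r IH] m gr gm; apply/negP => bm.
  have ma_deg : (m a <= mdeg m)%N by rewrite mdegE (bigD1 a) //= leq_addr.
  by have := msize_mdeg_lt gm; lia.
suff shift0 : (if (0 < m b)%N then g@_(m + U_(a) - U_(b)) else 0) = 0.
  have := gP (m + U_(a))%MM; rewrite mcoeff_msupp mcoeff_XsubXM // shift0 subr0.
  by rewrite -mcoeff_msupp => /(_ gm); apply/negP/bad_notP.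
case: ifP => // mb; apply/eqP/negPn/negP; rewrite -mcoeff_msupp => gm'.
apply/negP: (bad_shift m bm mb); apply: IH gm'.
by move: gr; rewrite mnmBE mnmDE !mnm1E eqxx eq_sym (negbTE ab); lia.
Qed.

Lemma msupp_XsubXM_mbox_half a b g d c : a != b ->
    {subset msupp (('X_a - 'X_b) * g) <= mbox d.+1 c} ->
  forall m, m \in msupp g ->
    mdeg m = d /\ forall k, k != b -> (m k <= c k - ((k == a) || (k == b)))%N.
Proof.
move=> ab gc m gm; split.
  apply/eqP/negPn; move: gm.
  apply: (msupp_XsubXM_avoid (bad := fun m => mdeg m != d) ab gc) => {}m /= md.
    move=> mb; have le : (U_(b) <= m + U_(a))%MM.
      by apply/mnm_lepP => k; rewrite mnmDE !mnm1E; case: (b =P k) => [<-|_] /=; lia.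
    have /addIn -> : (mdeg (m + U_(a) - U_(b)) + 1 = mdeg m + 1)%N.
      by have := congr1 mdeg (submK le); rewrite !mdegD !mdeg1.
    exact: md.
  by rewrite inE mdegD mdeg1 addn1 eqSS (negbTE md).
move=> k kb; rewrite leqNgt; move: gm.
apply: (msupp_XsubXM_avoid (bad := fun m => c k - ((k == a) || (k == b)) < m k)%N ab gc).
  by move=> {}m /= mk _; rewrite mnmBE mnmDE !mnm1E (eq_sym b k) (negbTE kb) subn0; lia.
move=> {}m /= mk; rewrite inE negb_and; apply/orP; right.
rewrite negb_forall; apply/existsP; exists k; rewrite mnmDE mnm1E -ltnNge.
by rewrite (negbTE kb) orbF eq_sym in mk *; case: (k == a) mk => /=; lia.
Qed.

Lemma msupp_XsubXM_mbox a b g d c : a != b ->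
    {subset msupp (('X_a - 'X_b) * g) <= mbox d.+1 c} ->
  {subset msupp g <= mbox d (fun k => c k - ((k == a) || (k == b)))%N}.
Proof.
move=> ab gc m gm.
have [md mkb] := msupp_XsubXM_mbox_half ab gc gm.
have gc' : {subset msupp (('X_b - 'X_a) * g) <= mbox d.+1 c}.
  by move=> m'; rewrite -opprB mulNr (perm_mem (msuppN _)); apply: gc.
have ba : b != a by rewrite eq_sym.
have [_ mka] := msupp_XsubXM_mbox_half ba gc' gm.
rewrite inE md eqxx /=; apply/forallP => k.
case: (eqVneq k b) (mkb k) (mka k) => [-> _|_ /(_ isT) // _].
by rewrite orbT => /(_ ba).
Qed.

End DividedDifferenceSupport.

Section EvaluationAtFirstUnitVector.

Variable N : nat.
Implicit Types (m : 'X_{1..N.+1}) (p : {mpoly int[N.+1]}).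

Definition e1 (k : 'I_N.+1) : int := (k == ord0)%:R.

Lemma mnm_ord0P m :
  reflect (m = U_(ord0) *+ m ord0)%MM [forall k, m (lift ord0 k) == 0%N].
Proof.
apply: (iffP forallP) => [m0|mE k]; last first.
  by rewrite mE mulmnE mnm1E (negbTE (neq_lift _ _)).
apply/mnmP => k; rewrite mulmnE mnm1E.
case: (unliftP ord0 k) => [k' ->|->]; last by rewrite eqxx mul1n.
by rewrite (negbTE (neq_lift _ _)) (eqP (m0 k')).
Qed.

Lemma meval_e1X m : meval e1 'X_[m] = [forall k, m (lift ord0 k) == 0%N]%:R.
Proof.
rewrite mevalX big_ord_recl /e1 eqxx expr1n mul1r.
have [m0|/forallPn [k mk]] := boolP [forall k, m (lift ord0 k) == 0%N].
  by apply: big1 => k _; rewrite (eqP (forallP m0 k)).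
by rewrite (bigD1 k) //= expr0n (negbTE mk) mul0r.
Qed.

Lemma meval_e1_hcomp k j : meval e1 (hcomp N.+1 k.+1 j) = 1.
Proof.
have mjP : (mdeg (U_(@ord0 N) *+ j) < j.+1)%N by rewrite mdegMn mdeg1 mul1n.
pose mj : 'X_{1..N.+1 < j.+1} := BMultinom mjP.
rewrite /hcomp raddf_sum (bigD1 mj) /=; last first.
  rewrite mdegMn mdeg1 mul1n eqxx; apply/forallP => i; apply/implyP => ki.
  have /negbTE i0 : ord0 != i by apply: contraTneq ki => <-.
  by rewrite mulmnE mnm1E i0.
rewrite big1 ?addr0 => [|m /andP [/andP [/eqP md _] m_mj]].
  by rewrite meval_e1X; case: mnm_ord0P => //; rewrite mulmnE mnm1E eqxx mul1n.
rewrite meval_e1X; case: mnm_ord0P => // mE; case/eqP: m_mj; apply: val_inj => /=.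
by rewrite mE -[in RHS]md [in RHS]mE mdegMn mdeg1 mul1n.
Qed.

Lemma meval_e1_complete_hom_monomial p : complete_hom_monomial p -> meval e1 p = 1.
Proof. by case=> a ->; rewrite rmorph_prod; apply: big1 => k _; apply: meval_e1_hcomp. Qed.

Lemma meval_e1_mbox p d c :
  {subset msupp p <= mbox d c} -> (c ord0 < d)%N -> meval e1 p = 0.
Proof.
move=> pc c0d; rewrite mevalE big1_seq // => m /pc /andP [/eqP md /forallP mc].
rewrite -mevalX meval_e1X; case: mnm_ord0P => [mE|]; last by rewrite mulr0.
by have := mc ord0; move: md; rewrite {1}mE mdegMn mdeg1 mul1n; lia.
Qed.

End EvaluationAtFirstUnitVector.

Section SchubertSupport.

Variables (n N : nat) (S : {perm 'I_n} -> {mpoly int[N]}).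
Hypotheses (hnN : (n <= N)%N) (HS : schubert_family S).

Definition nonrecord_bound (u : {perm 'I_n}) (k : 'I_N) := #|nonrecords u k|.

Lemma msupp_schubert_w0 :
  {subset msupp (S (w0 n)) <= mbox (perm_length (w0 n)) (nonrecord_bound (w0 n))}.
Proof.
pose m0 : 'X_{1..N} := [multinom (n - k.+1)%N | k < N].
have -> : S (w0 n) = 'X_[m0].
  rewrite HS.1 (big_ord_widen N (fun k => var N k ^+ (n.-1 - k)) hnN) big_mkcond /=.
  rewrite mpolyXE_id; apply: eq_bigr => k _; rewrite mnmE varE.
  by case: ltnP => kn; [congr (_ ^+ _); lia | rewrite (_ : n - k.+1 = 0)%N ?expr0 //; lia].
move=> m; rewrite msuppX inE => /eqP ->; rewrite inE; apply/andP; split.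
  apply/eqP; rewrite perm_length_w0 mdegE.
  rewrite (big_ord_widen N (fun k => n - k.+1)%N hnN) [RHS]big_mkcond.
  by apply: eq_bigr => k _; rewrite mnmE; case: ltnP => //; lia.
by apply/forallP => k; rewrite mnmE card_nonrecords_w0.
Qed.

Lemma msupp_schubert_ascent (u : {perm 'I_n}) (i j : 'I_n) :
    j = i.+1 :> nat -> (u i < u j)%N -> (forall a : 'I_n, a < i -> u i < u a)%N ->
    let v := (tperm i j * u)%g in
    {subset msupp (S v) <= mbox (perm_length v) (nonrecord_bound v)} ->
  {subset msupp (S u) <= mbox (perm_length u) (nonrecord_bound u)}.
Proof.
move=> ji uij dec v Sv.
pose a := widen_ord hnN i; pose b := widen_ord hnN j.
have ab : a != b by rewrite -val_eqE /= ji; lia.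
have uv : (tperm i j * v)%g = u by rewrite /v tpermKg.
have lenv := perm_length_tpermM_asc ji uij.
have rel : ('X_a - 'X_b) * S u = S v - swapvar a (S v).
  by have := HS.2 v i j ji; rewrite /= uv lenv eqxx -!varE.
pose c k := (nonrecord_bound u k + ((k == a) || (k == b)))%N.
have Sv_c : {subset msupp (S v) <= mbox (perm_length u).+1 c}.
  move=> m /Sv; rewrite lenv; apply: mbox_le => k.
  apply: leq_trans (card_nonrecords_tpermM ji uij k dec) _.
  by rewrite /c /nonrecord_bound leq_add2l -!val_eqE /=; case: (_ == _).
have ca_cb : c a = c b.
  by rewrite /c /nonrecord_bound /= ji -(nonrecords_ascent ji uij) !eqxx orbT.
have Su_c : {subset msupp (('X_a - 'X_b) * S u) <= mbox (perm_length u).+1 c}.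
  by rewrite rel; exact: (msupp_sub_swapvar (a := a) (b := b) ji ca_cb Sv_c).
by move=> m /(msupp_XsubXM_mbox ab Su_c); apply: mbox_le => k; rewrite /c addnK.
Qed.


Lemma msupp_schubert u :
  {subset msupp (S u) <= mbox (perm_length u) (nonrecord_bound u)}.
Proof.
suff bounded d : forall u, (n * n - perm_length u < d)%N ->
    {subset msupp (S u) <= mbox (perm_length u) (nonrecord_bound u)}.
  exact: bounded (ltnSn _).
elim: d => // d IH {}u ud.
have [->|uw0] := eqVneq u (w0 n); first exact: msupp_schubert_w0.
have [i [j [ji uij dec]]] := first_ascent uw0.
apply: (msupp_schubert_ascent ji uij dec (IH _ _)).
by have := perm_length_le (tperm i j * u); rewrite (perm_length_tpermM_asc ji uij); lia.
Qed.

End SchubertSupport.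

Theorem lemma19 (n N : nat) (hnN : (n <= N)%N)
    (S : {perm 'I_n} -> {mpoly int[N]}) (HS : schubert_family S)
    (w : {perm 'I_n}) (H321 : contains321 w) :
  ~ complete_hom_monomial (S w).
Proof.
have n_gt0 : (0 < n)%N by case: H321 => a _; exact: leq_ltn_trans (leq0n a) (ltn_ord a).
case: N hnN S HS => [|N] hnN S HS; first by have := leq_trans n_gt0 hnN.
move/meval_e1_complete_hom_monomial.
by rewrite (meval_e1_mbox (msupp_schubert hnN HS (u := w)) (card_nonrecords0_lt_length H321)).
Qed.
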